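(* Let $\delta_1>0$ be an admissible one-dimensional sum-product exponent, i.e. a constant such that every finite, non-empty set $B\subseteq\mathbb{R}$ satisfies $|B+B|+|B\cdot B|\gtrsim |B|^{1+\delta_1}$, and for $u\in\mathbb{N}$ put $\delta_u=\delta_1/u$. Let $d\ge 2$, let $H$ be an axis aligned affine subspace of $\mathbb{R}^d$ of dimension $r$ with $1\le r\le d-1$, and let $A$ be a finite, non-empty subset of $H$. Then \[ |A+A|+|A\cdot A| \gtrsim_r |A|^{1+\delta_r}. \]
   Context: Addition and multiplication in $\mathbb{R}^d$ are coordinatewise, and $A+A=\{a+b:a,b\in A\}$, $A\cdot A=\{a\cdot b: a,b\in A\}$. An affine subspace $H\subseteq\mathbb{R}^d$ is axis aligned if $H=X_1\times\cdots\times X_d$ where for each $i$ either $X_i=\{a_i\}$ for some $a_i\in\mathbb{R}$ or $X_i=\mathbb{R}$. Notation: $X\gtrsim_z Y$ means $|X|\ge C|Y|(\log|A|)^{D}$ for some constants $C>0$ and $D$ depending only on the parameter $z$ (with $A$ the set under consideration); $\gtrsim$ is the same with absolute constants. By a result of Shakan, $\delta_1=1/3+5/5277$ is admissible. *)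

From Stdlib Require Import Reals.
From mathcomp Require Import all_boot all_algebra.
From mathcomp Require Import finmap.
From mathcomp Require Import Rstruct.

Set Implicit Arguments.
Unset Strict Implicit.
Unset Printing Implicit Defensive.

Local Open Scope fset_scope.

Definition cwmul (d : nat) (a b : 'rV[R]_d) : 'rV[R]_d :=
  \row_i (a ord0 i * b ord0 i)%R.

Definition sumset {d : nat} (A : {fset 'rV[R]_d}) : {fset 'rV[R]_d} :=
  [fset (a + b)%R | a in A, b in A].
Definition prodset {d : nat} (A : {fset 'rV[R]_d}) : {fset 'rV[R]_d} :=
  [fset cwmul a b | a in A, b in A].

Definition sumset1 (B : {fset R}) : {fset R} := [fset (a + b)%R | a in B, b in B].
Definition prodset1 (B : {fset R}) : {fset R} := [fset (a * b)%R | a in B, b in B].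

Definition logpow (n : nat) (D : R) : R := Rpower (ln (INR n)) D.

Definition gtrsim_with (C D : R) (X Y : R) (n : nat) : Prop :=
  (C * Y * logpow n D <= X)%R.

Definition sp_admissible (delta1 : R) : Prop :=
  exists C D : R, (0 < C)%R /\
    forall B : {fset R}, B != fset0 ->
      gtrsim_with C D
        (INR #|` sumset1 B| + INR #|` prodset1 B|)%R
        (Rpower (INR #|` B|) (1 + delta1))
        #|` B|.

(* An axis-aligned affine subspace H = X_1 x ... x X_d of R^d is encoded by
   f : 'I_d -> option R, where f i = Some a means X_i = {a}, and
   f i = None means X_i = R. *)
Definition in_axis_aligned (d : nat) (f : 'I_d -> option R) (x : 'rV[R]_d) : Prop :=
  forall i : 'I_d, match f i with Some a => x ord0 i = a | None => True end.

Definition axis_dim (d : nat) (f : 'I_d -> option R) : nat :=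
  #|[set i : 'I_d | f i == None]|.

(* Keeping only the points of A with the most popular zero pattern costs a factor
   2^r and leaves a set with at most r free coordinates, all nonzero, constant in
   the other coordinates.  Induct on the number k of free coordinates; for k = 1
   the set is a copy of a subset of R.  For the step fix a free coordinate i.  A
   harmonic-sum pigeonhole gives M such that the set B of values b over which A
   has at least M points satisfies |A| <= M |B| (1 + ln |A|).  Translating, resp.
   dilating (the coordinates are nonzero), one fibre by the points of another
   gives M (|B+B| + |B.B|) <= |A+A| + |A.A|.  The fibres have k - 1 free
   coordinates, and their sum and product sets overlap at most twice, so by
   induction |B| M^(1 + δ/(k-1)) <~ |A+A| + |A.A|.  Averaging the two bounds with
   weights 1 and k - 1 gives the exponent 1 + δ/k. *)

From Stdlib Require Import Reals Lra Classical_Prop.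
From Coquelicot Require Import Rcomplements.
From mathcomp Require Import all_boot all_algebra finmap Rstruct zify.

Set Implicit Arguments.
Unset Strict Implicit.
Unset Printing Implicit Defensive.

Import GRing.Theory Num.Theory.

Local Open Scope fset_scope.

Section LogEstimates.
Local Open Scope R_scope.

Lemma exp_le_of_le_ln x y : 0 < y -> x <= ln y -> exp x <= y.
Proof.
move=> y_gt0 [lt|->]; last by rewrite exp_ln //; lra.
by left; rewrite -(exp_ln y) //; apply: exp_increasing.
Qed.

Lemma ln2_gt0 : 0 < ln 2.
Proof. exact: Rlt_trans (Rinv_0_lt_compat _ Rlt_0_2) ln_lt_2. Qed.

Lemma INR_gt0 n : (0 < n)%N -> 0 < INR n.
Proof. by move=> n_gt0; apply: lt_0_INR; lia. Qed.

Lemma le1_add_div (δ : R) n : 0 <= δ -> (0 < n)%N -> 1 <= 1 + δ / INR n.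
Proof.
move=> δ_ge0 /INR_gt0 n_gt0.
by have := Rmult_le_pos _ _ δ_ge0 (Rlt_le _ _ (Rinv_0_lt_compat _ n_gt0)); rewrite /Rdiv; lra.
Qed.

Lemma ln_INR_le m n : (0 < m)%N -> (m <= n)%N -> ln (INR m) <= ln (INR n).
Proof. by move=> m_gt0 le_mn; apply: ln_le; [exact: INR_gt0 | apply: le_INR; lia]. Qed.

Lemma ln_INR_ge0 n : (0 < n)%N -> 0 <= ln (INR n).
Proof. by move=> n_gt0; rewrite -ln_1 -[1]/(INR 1); apply: ln_INR_le. Qed.

(* Stands in for [ln (ln n)]: nonnegative, monotone, and zero at [n = 1]. *)
Definition loglog (n : nat) : R := ln (1 + ln (INR n)).

Lemma loglog_ge0 n : (0 < n)%N -> 0 <= loglog n.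
Proof. by move=> /ln_INR_ge0 ge0; rewrite /loglog -ln_1; apply: ln_le; lra. Qed.

Lemma loglog_le m n : (0 < m)%N -> (m <= n)%N -> loglog m <= loglog n.
Proof.
move=> m_gt0 le_mn; have := ln_INR_ge0 m_gt0; have := ln_INR_le m_gt0 le_mn.
by rewrite /loglog => ? ?; apply: ln_le; lra.
Qed.

Lemma ln_ln_loglog n : (0 < n)%N -> loglog n - ln 3 <= ln (ln (INR n)) <= loglog n.
Proof.
move=> n_gt0; case: (ltngtP n 1) => [|n_gt1|->]; first lia.
- have ln2_le : ln 2 <= ln (INR n) by rewrite -[2]/(INR 2); apply: ln_INR_le; lia.
  have := ln_lt_2; rewrite /loglog => ?; split; last by apply: ln_le; lra.
  suff : ln (1 + ln (INR n)) <= ln (3 * ln (INR n)) by rewrite ln_mult; lra.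
  by apply: ln_le; lra.
- (* [ln] is [0] on nonpositive arguments, so [ln (ln 1) = ln 0 = 0]. *)
  rewrite /loglog /= ln_1 Rplus_0_r ln_1.
  have -> : ln 0 = 0 by rewrite /ln; case: Rlt_dec => // lt00; case: (Rlt_irrefl 0).
  have := ln_lt_2; have : ln 2 < ln 3 by apply: ln_increasing; lra.
  lra.
Qed.

Fixpoint harmonic (n : nat) : R :=
  if n is k.+1 then harmonic k + / INR k.+1 else 0.

Lemma inv_le_ln_succ n : (0 < n)%N -> / INR n.+1 <= ln (INR n.+1) - ln (INR n).
Proof.
move=> n_gt0; have n_pos := INR_gt0 n_gt0; rewrite S_INR.
have : INR n <= (INR n + 1) * exp (- / (INR n + 1)).
  apply: Rle_trans (_ : (INR n + 1) * (1 + - / (INR n + 1)) <= _).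
    by right; field; lra.
  by apply: Rmult_le_compat_l; [lra | exact: exp_ineq1_le].
move=> /(ln_le _ _ n_pos); rewrite ln_mult ?ln_exp; first lra; [lra | exact: exp_pos].
Qed.

Lemma harmonic_le n : (0 < n)%N -> harmonic n <= 1 + ln (INR n).
Proof.
elim: n => [//|[_ _|n IHn _]]; first by rewrite /= ln_1; lra.
have := IHn isT; have := inv_le_ln_succ (isT : (0 < n.+1)%N).
by change (harmonic n.+2) with (harmonic n.+1 + / INR n.+2); lra.
Qed.

Lemma harmonic_partial_sum_lt (c : nat -> nat) N L n : (0 < n <= N)%N ->
  (forall M, (0 < M <= n)%N -> INR M * INR (c M) * L < INR N) ->
  INR (\sum_(1 <= M < n.+1) c M) * L < INR N * harmonic n.
Proof.
have inv_bound M : (0 < M)%N -> INR M * INR (c M) * L < INR N ->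
    INR (c M) * L < INR N * / INR M.
  move=> M_gt0 lt; have M_pos := INR_gt0 M_gt0.
  apply: (Rmult_lt_reg_l (INR M)) => //.
  by rewrite -Rmult_assoc -(Rmult_comm (/ INR M)) -Rmult_assoc Rinv_r ?Rmult_1_l; lra.
elim: n => [//|[_ _ small|n IHn /andP[_ le_nN] small]].
  by rewrite big_nat1 /=; have := inv_bound 1%N isT (small 1%N isT); rewrite /=; lra.
have -> : (\sum_(1 <= M < n.+3) c M = \sum_(1 <= M < n.+2) c M + c n.+2)%N.
  by rewrite big_nat_recr.
have : INR (\sum_(1 <= M < n.+2) c M) * L < INR N * harmonic n.+1.
  by apply: IHn => [|M ?]; [lia | apply: small; lia].
have := inv_bound n.+2 isT (small n.+2 (leqnn _)).
change (harmonic n.+2) with (harmonic n.+1 + / INR n.+2).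
by rewrite plus_INR Rmult_plus_distr_r Rmult_plus_distr_l; lra.
Qed.

Lemma harmonic_pigeonhole (c : nat -> nat) N : (0 < N)%N ->
    (N <= \sum_(1 <= M < N.+1) c M)%N ->
  exists2 M, (0 < M <= N)%N & INR N <= INR M * INR (c M) * (1 + ln (INR N)).
Proof.
move=> N_gt0 le_N_sum; apply: NNPP => no_M.
have small M : (0 < M <= N)%N -> INR M * INR (c M) * (1 + ln (INR N)) < INR N.
  move=> M_range; case: (Rle_lt_dec (INR N) (INR M * INR (c M) * (1 + ln (INR N)))) => //.
  by move=> le; case: no_M; exists M.
have N_range : (0 < N <= N)%N by rewrite N_gt0 leqnn.
have := harmonic_partial_sum_lt N_range small.
have L_ge1 : 1 <= 1 + ln (INR N) by have := ln_INR_ge0 N_gt0; lra.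
have := Rmult_le_compat_l _ _ _ (Rlt_le _ _ (INR_gt0 N_gt0)) (harmonic_le N_gt0).
have := Rmult_le_compat_r _ _ _ (Rle_trans _ _ _ Rle_0_1 L_ge1) (le_INR _ _ (ssrnat.leP le_N_sum)).
lra.
Qed.

End LogEstimates.

Section Fibers.
Variables (T : choiceType) (J : eqType) (h : T -> J).
Implicit Types (Z : {fset T}) (X : seq J).

Definition fiber Z (j : J) : {fset T} := [fset z in Z | h z == j].

Lemma fiber_sub Z j : fiber Z j `<=` Z.
Proof. by apply/fsubsetP => z; rewrite !inE => /andP[]. Qed.

Lemma sum_card_fiber Z X :
  \sum_(j <- X) #|` fiber Z j| = \sum_(z <- Z) count_mem (h z) X.
Proof.
under eq_bigr => j _ do
  rewrite card_fset_sum1 -big_fset_condE /= big_mkcond /=.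
rewrite exchange_big /=; apply: eq_bigr => z _.
by rewrite -sum1_count [RHS]big_mkcond; apply: eq_bigr => j _; rewrite eq_sym.
Qed.

Lemma sum_card_fiber_le Z X : uniq X -> (\sum_(j <- X) #|` fiber Z j| <= #|` Z|)%N.
Proof.
move=> X_uniq; rewrite sum_card_fiber card_fset_sum1.
by apply: leq_sum => z _; rewrite count_uniq_mem // leq_b1.
Qed.

Lemma card_le_sum_fiber Z X : {in Z, forall z, h z \in X} ->
  (#|` Z| <= \sum_(j <- X) #|` fiber Z j|)%N.
Proof.
move=> hZX; rewrite sum_card_fiber card_fset_sum1 big_seq_cond [X in (_ <= X)%N]big_seq_cond.
by apply: leq_sum => z /andP[zZ _]; rewrite -has_count has_pred1 hZX.
Qed.

End Fibers.

Section Coordinates.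
Local Open Scope ring_scope.
Variable d : nat.
Implicit Types (A : {fset 'rV[R]_d}) (F : {set 'I_d}).

Definition coord (i : 'I_d) (a : 'rV[R]_d) : R := a ord0 i.

Lemma coord_add i a b : coord i (a + b) = coord i a + coord i b.
Proof. by rewrite /coord mxE. Qed.

Lemma coord_cwmul i a b : coord i (cwmul a b) = coord i a * coord i b.
Proof. by rewrite /coord mxE. Qed.

Definition const_off F A : Prop :=
  {in A &, forall a b, forall j, j \notin F -> coord j a = coord j b}.

Definition nonzero_on F A : Prop := {in A, forall a, forall j, j \in F -> coord j a != 0}.

Lemma const_off_set0_card A : const_off set0 A -> (#|` A| <= 1)%N.
Proof.
case: (fset_0Vmem A) => [-> _|[a aA] cA]; first by rewrite cardfs0.
suff /fsubset_leq_card : A `<=` [fset a] by rewrite cardfs1.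
apply/fsubsetP => b bA; rewrite inE; apply/eqP/rowP => j.
by apply: cA => //; rewrite inE.
Qed.

Lemma fiber_const_off F A i b :
  const_off F A -> const_off (F :\ i) (fiber (coord i) A b).
Proof.
move=> cA a c; rewrite !inE => /andP[aA /eqP ab] /andP[cA' /eqP cb] j.
rewrite !inE negb_and negbK => /orP[/eqP ->|jF]; [by rewrite ab cb | exact: cA].
Qed.

Lemma fiber_nonzero F A i b : nonzero_on F A -> nonzero_on (F :\ i) (fiber (coord i) A b).
Proof. by move=> nA a; rewrite !inE => /andP[aA _] j; rewrite !inE => /andP[_]; apply: nA. Qed.

Definition rich (i : 'I_d) A (M : nat) : {fset R} :=
  [fset b in coord i @` A | (M <= #|` fiber (coord i) A b|)%N].

Lemma rich_fiber_ne i A M b : (0 < M)%N -> b \in rich i A M -> fiber (coord i) A b != fset0.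
Proof. by move=> M_gt0; rewrite inE -cardfs_gt0 => /andP[_]; apply: leq_trans. Qed.

Lemma card_rich_le i A M : (#|` rich i A M| <= #|` A|)%N.
Proof.
apply: (@leq_trans #|` coord i @` A|); last exact: leq_imfset_card.
apply: fsubset_leq_card.
by apply/fsubsetP => b; rewrite inE => /andP[].
Qed.

Lemma axis_aligned_const_off (f : 'I_d -> option R) (A : {fset 'rV[R]_d}) :
  (forall a, a \in A -> in_axis_aligned f a) -> const_off [set j | f j == None] A.
Proof.
move=> A_H a b aA bA j; rewrite inE /coord.
by have := A_H a aA j; have := A_H b bA j; case: (f j) => [c -> ->|].
Qed.

End Coordinates.

Section OpSets.
Local Open Scope ring_scope.
Variables (d : nat) (i : 'I_d) (op : 'rV[R]_d -> 'rV[R]_d -> 'rV[R]_d) (opR : R -> R -> R).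
Hypothesis op_coord : forall a b, coord i (op a b) = opR (coord i a) (coord i b).
Implicit Types (A : {fset 'rV[R]_d}).

Definition opset A : {fset 'rV[R]_d} := [fset op a b | a in A, b in A].

Lemma opset_sub A' A : A' `<=` A -> opset A' `<=` opset A.
Proof.
move=> /fsubsetP sA; apply/fsubsetP => _ /imfset2P[a aA [b bA ->]].
by apply: in_imfset2; apply: sA.
Qed.

Lemma opset_fiber_sub A b :
  opset (fiber (coord i) A b) `<=` fiber (coord i) (opset A) (opR b b).
Proof.
apply/fsubsetP => _ /imfset2P[a + [c +  ->]]; rewrite !inE => /andP[aA /eqP ab] /andP[cA /eqP cb].
by rewrite in_imfset2 //= op_coord ab cb.
Qed.

Lemma sum_card_opset_fiber_le A (X : seq R) : uniq [seq opR b b | b <- X] ->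
  (\sum_(b <- X) #|` opset (fiber (coord i) A b)| <= #|` opset A|)%N.
Proof.
move=> X_uniq; apply: leq_trans (sum_card_fiber_le (coord i) (opset A) X_uniq).
by rewrite big_map; apply: leq_sum => b _; apply/fsubset_leq_card/opset_fiber_sub.
Qed.

Lemma card_opset_rich A M : (0 < M)%N -> {in A, forall a, {in A &, injective (op a)}} ->
  (M * #|` [fset opR x y | x in rich i A M, y in rich i A M]| <= #|` opset A|)%N.
Proof.
move=> M_gt0 op_inj; set S := [fset opR x y | x in _, y in _].
apply: leq_trans (sum_card_fiber_le (coord i) (opset A) (fset_uniq S)).
rewrite card_fset_sum1 big_distrr /= !big_seq; apply: leq_sum => _ /imfset2P[x x_rich [y y_rich ->]].
have /fset0Pn[a] := rich_fiber_ne M_gt0 x_rich; rewrite inE => /andP[aA /eqP ax].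
move: y_rich; rewrite inE muln1 => /andP[_ /leq_trans]; apply.
have /fsubsetP fiber_y_sub := fiber_sub (coord i) A y.
have inj_a : {in fiber (coord i) A y &, injective (op a)}.
  by move=> z z' /fiber_y_sub zA /fiber_y_sub z'A; apply: op_inj.
rewrite -(card_in_imfset imfset_key inj_a).
apply/fsubset_leq_card/fsubsetP => _ /imfsetP[z /= zy ->]; move: (zy); rewrite inE => /andP[zA /eqP zb].
by rewrite !inE /= op_coord ax zb eqxx andbT; apply: in_imfset2.
Qed.

End OpSets.

Section SumProductSets.
Local Open Scope ring_scope.
Variable d : nat.
Implicit Types (A : {fset 'rV[R]_d}) (F : {set 'I_d}).

Definition spcard A : nat := (#|` sumset A| + #|` prodset A|)%N.

Definition spcard1 (B : {fset R}) : nat := (#|` sumset1 B| + #|` prodset1 B|)%N.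

Lemma spcard_gt0 A : A != fset0 -> (0 < spcard A)%N.
Proof.
case/fset0Pn => a aA; rewrite /spcard ltn_addr // cardfs_gt0.
by apply/fset0Pn; exists (a + a); apply: in_imfset2.
Qed.

Lemma spcard1_gt0 (B : {fset R}) : B != fset0 -> (0 < spcard1 B)%N.
Proof.
case/fset0Pn => b bB; rewrite /spcard1 ltn_addr // cardfs_gt0.
by apply/fset0Pn; exists (b + b); apply: in_imfset2.
Qed.

Lemma spcard_sub A' A : A' `<=` A -> (spcard A' <= spcard A)%N.
Proof.
move=> sA; rewrite /spcard leq_add //; apply: fsubset_leq_card.
  exact: (opset_sub +%R sA).
exact: (opset_sub (@cwmul d) sA).
Qed.

Lemma sqr_inj_sign (b c : R) : (0 <= b) = (0 <= c) -> b * b = c * c -> b = c.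
Proof.
move=> sign_bc /eqP; rewrite -!expr2 eqf_sqr => /orP[/eqP //|/eqP b_Nc].
move: sign_bc; rewrite b_Nc oppr_ge0.
by case: (ltrgtP c 0) => // ->; rewrite oppr0.
Qed.

Lemma spcard_rich F A i M : (0 < M)%N -> const_off F A -> nonzero_on F A ->
  (M * spcard1 (rich i A M) <= spcard A)%N.
Proof.
move=> M_gt0 cA nA; rewrite /spcard1 /spcard mulnDr leq_add //.
  apply: (card_opset_rich (opR := +%R) (coord_add i)) => // a _ b c _ _; exact: addrI.
apply: (card_opset_rich (opR := *%R) (coord_cwmul i)) => // a aA b c bA cA' /rowP abc.
apply/rowP => j; case: (boolP (j \in F)) => [jF|jF]; last exact: cA.
by apply: (mulfI (nA a aA j jF)); have := abc j; rewrite !mxE.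
Qed.

(* The fibre sum sets lie over the distinct values [b + b]; the fibre product sets
   lie over [b * b], which is injective on each sign class. *)
Lemma sum_spcard_fiber_le i A (X : seq R) : uniq X ->
  (\sum_(b <- X) spcard (fiber (coord i) A b) <= 2 * spcard A)%N.
Proof.
move=> X_uniq; rewrite big_split /= /spcard.
have sum_le : (\sum_(b <- X) #|` sumset (fiber (coord i) A b)| <= #|` sumset A|)%N.
  apply: (sum_card_opset_fiber_le (opR := +%R) (coord_add i)).
  by rewrite map_inj_uniq // => b c; rewrite -!mulr2n; apply: pmulrnI.
have prod_le (P : pred R) : (forall b c, P b -> P c -> (0 <= b) = (0 <= c)) ->
    (\sum_(b <- X | P b) #|` prodset (fiber (coord i) A b)| <= #|` prodset A|)%N.
  move=> P_sign; rewrite -big_filter.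
  apply: (sum_card_opset_fiber_le (opR := *%R) (coord_cwmul i)).
  rewrite map_inj_in_uniq ?filter_uniq // => b c.
  by rewrite !mem_filter => /andP[Pb _] /andP[Pc _]; apply/sqr_inj_sign/P_sign.
rewrite [X in (_ + X <= _)%N](bigID (fun b => 0 <= b)) /=.
have nonneg_le := prod_le (fun b => 0 <= b) (fun b c => ltac:(by move=> -> ->)).
have neg_le := prod_le (fun b => ~~ (0 <= b)) (fun b c => ltac:(by move=> /negbTE -> /negbTE ->)).
apply: leq_trans (leq_add sum_le (leq_add nonneg_le neg_le)) _.
by rewrite mulnDr !mul2n -!addnn leq_add2r leq_addr.
Qed.

End SumProductSets.

Section ZeroPatterns.
Local Open Scope ring_scope.
Variable d : nat.
Implicit Types (A : {fset 'rV[R]_d}) (F P : {set 'I_d}).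

Definition zero_pattern F (a : 'rV[R]_d) : {set 'I_d} := [set j in F | coord j a == 0].

Lemma zero_class_const_off F A P :
  const_off F A -> const_off (F :\: P) (fiber (zero_pattern F) A P).
Proof.
move=> cA a b; rewrite !inE => /andP[aA /eqP aP] /andP[bA /eqP bP] j.
rewrite inE negb_and negbK => /orP[jP|]; last exact: cA.
by move: jP (jP); rewrite -{1}aP -bP !inE => /andP[_ /eqP ->] /andP[_ /eqP ->].
Qed.

Lemma zero_class_nonzero F A P : nonzero_on (F :\: P) (fiber (zero_pattern F) A P).
Proof. by move=> a; rewrite !inE => /andP[_ /eqP <-] j; rewrite !inE => /andP[+ jF]; rewrite jF. Qed.

Lemma large_zero_class F A :
  exists P, (#|` A| <= 2 ^ #|F| * #|` fiber (zero_pattern F) A P|)%N.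
Proof.
have : (#|` A| <= \sum_(P <- enum (powerset F)) #|` fiber (zero_pattern F) A P|)%N.
  apply: card_le_sum_fiber => a _; rewrite mem_enum powersetE.
  by apply/subsetP => j; rewrite inE => /andP[].
rewrite big_enum /= => cover.
have [|P _ P_max] := eq_bigmax_cond (fun P => #|` fiber (zero_pattern F) A P|) (A := mem (powerset F)).
  by rewrite card_powerset expn_gt0.
exists P; rewrite -card_powerset -P_max -sum_nat_const; apply: leq_trans cover _.
by apply: leq_sum => Q QF; apply: leq_bigmax_cond.
Qed.

End ZeroPatterns.

Lemma sum_indicator (c N : nat) : \sum_(1 <= M < N.+1) (M <= c)%N = minn c N.
Proof.
elim: N => [|N IHN]; first by rewrite big_geq // minn0.
by rewrite big_nat_recr //= IHN; case: (leqP N.+1 c) => /=; lia.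
Qed.

Section LogBounds.
Local Open Scope R_scope.

Lemma rich_pigeonhole d (i : 'I_d) (A : {fset 'rV[R]_d}) : A != fset0 ->
  exists2 M, (0 < M <= #|` A|)%N &
    INR #|` A| <= INR M * INR #|` rich i A M| * (1 + ln (INR #|` A|)).
Proof.
move=> A_ne; apply: harmonic_pigeonhole; first by rewrite cardfs_gt0.
have card_rich M : #|` rich i A M| = \sum_(b <- coord i @` A) (M <= #|` fiber (coord i) A b|)%N.
  by rewrite card_fset_sum1 -big_fset_condE big_mkcond.
under eq_bigr => M _ do rewrite card_rich.
have cover : {in A, forall a, coord i a \in coord i @` A} by move=> a; apply: in_imfset.
rewrite exchange_big /=; apply: leq_trans (card_le_sum_fiber cover) _.
rewrite big_seq [X in (_ <= X)%N]big_seq; apply: leq_sum => b _.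
by rewrite sum_indicator leq_min leqnn fsubset_leq_card // fiber_sub.
Qed.

Lemma INR_sum_ge (X : seq R) (g : R -> nat) (t : R) :
  (forall b, b \in X -> t <= INR (g b)) -> INR (size X) * t <= INR (\sum_(b <- X) g b).
Proof.
elim: X => [|b X IHX] t_le; first by rewrite big_nil /=; lra.
rewrite big_cons plus_INR [size _]/= S_INR.
have := t_le b (mem_head _ _).
by have := IHX (fun c cX => t_le c (mem_behead (cX : c \in behead (b :: X)))); lra.
Qed.

Lemma gtrsim_with_ln C D X α n : 0 < C -> 0 < X ->
  gtrsim_with C D X (Rpower (INR n) α) n <->
  ln C + α * ln (INR n) + D * ln (ln (INR n)) <= ln X.
Proof.
move=> C_gt0 X_gt0; rewrite /gtrsim_with -!RmultE.
have -> : C * Rpower (INR n) α * logpow n D = exp (ln C + α * ln (INR n) + D * ln (ln (INR n))).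
  by rewrite /logpow /Rpower !exp_plus exp_ln.
split => [/RleP le|le]; last exact/RleP/exp_le_of_le_ln.
by rewrite -[_ + _ + _]ln_exp; apply: ln_le => //; exact: exp_pos.
Qed.

Definition sp_log_bound d (α a E : R) (A : {fset 'rV[R]_d}) : Prop :=
  a + α * ln (INR #|` A|) - E * loglog #|` A| <= ln (INR (spcard A)).

Definition log_admissible (δ a0 E0 : R) : Prop :=
  forall B : {fset R}, B != fset0 ->
    a0 + (1 + δ) * ln (INR #|` B|) - E0 * loglog #|` B| <= ln (INR (spcard1 B)).

Definition free_sp_bound (δ : R) (k : nat) (a E : R) : Prop :=
  forall d (F : {set 'I_d}) (A : {fset 'rV[R]_d}), A != fset0 -> (#|F| <= k)%N ->
    const_off F A -> nonzero_on F A -> sp_log_bound (1 + δ / INR k) a E A.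

Lemma sp_admissible_log δ : sp_admissible δ ->
  exists a0 E0, a0 <= 0 /\ 0 <= E0 /\ log_admissible δ a0 E0.
Proof.
case=> C [D [/RltP C_gt0 adm]].
have ln3_gt0 : 0 < ln 3 by rewrite -ln_1; apply: ln_increasing; lra.
exists (- Rabs (ln C) - Rabs D * ln 3), (Rabs D).
split; [|split; first exact: Rabs_pos].
  by have := Rabs_pos (ln C); have := Rmult_le_pos _ _ (Rabs_pos D) (Rlt_le _ _ ln3_gt0); lra.
move=> B B_ne; have B_gt0 : (0 < #|` B|)%N by rewrite cardfs_gt0.
have := INR_gt0 (spcard1_gt0 B_ne); rewrite /spcard1 plus_INR => S_gt0.
move: (adm B B_ne) => /(gtrsim_with_ln _ _ _ C_gt0 S_gt0).
have [lo hi] := ln_ln_loglog B_gt0; have := loglog_ge0 B_gt0; have := Rle_abs (- ln C); rewrite Rabs_Ropp.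
by case: (Rle_lt_dec 0 D) => [D_ge0|D_lt0]; [rewrite (Rabs_pos_eq D) | rewrite (Rabs_left D)]; nra.
Qed.

Lemma sp_log_bound_const d α a E (A : {fset 'rV[R]_d}) :
  a <= 0 -> A != fset0 -> const_off set0 A -> sp_log_bound α a E A.
Proof.
move=> a_le0 A_ne /const_off_set0_card A_le1.
rewrite /sp_log_bound; have -> : #|` A| = 1%N by move: A_ne; rewrite -cardfs_gt0; lia.
rewrite /loglog [INR 1]/= ln_1 Rplus_0_r ln_1.
by have := ln_INR_ge0 (spcard_gt0 A_ne); lra.
Qed.

Lemma log_bound_mono α a E (m n N : nat) (s : R) : 0 <= α -> 0 <= E ->
  (0 < m)%N -> (m <= n)%N -> (n <= N)%N ->
  a + α * ln (INR n) - E * loglog n <= s -> a + α * ln (INR m) - E * loglog N <= s.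
Proof.
move=> α_ge0 E_ge0 m_gt0 le_mn le_nN.
have := Rmult_le_compat_l _ _ _ α_ge0 (ln_INR_le m_gt0 le_mn).
have := Rmult_le_compat_l _ _ _ E_ge0 (loglog_le (leq_trans m_gt0 le_mn) le_nN).
lra.
Qed.

Lemma card_rich1 d (i : 'I_d) (A : {fset 'rV[R]_d}) :
  const_off [set i] A -> #|` rich i A 1| = #|` A|.
Proof.
move=> cA; have -> : rich i A 1 = coord i @` A.
  apply/fsetP => b; rewrite /rich !inE /= andb_idr // => /imfsetP[a aA ->].
  by rewrite cardfs_gt0; apply/fset0Pn; exists a; rewrite !inE aA eqxx.
apply: card_in_imfset => a b aA bA ab; apply/rowP => j.
by case: (eqVneq j i) => [->|ji]; [exact: ab | apply: cA; rewrite ?inE].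
Qed.

Lemma free_sp_bound1 δ a0 E0 : a0 <= 0 -> log_admissible δ a0 E0 ->
  free_sp_bound δ 1 a0 E0.
Proof.
move=> a0_le0 adm d F A A_ne F_le1 cA nA.
case: (set_0Vmem F) => [F0|[i iF]]; first by apply: sp_log_bound_const; rewrite -?F0.
have F_i : F = [set i] by apply/esym/eqP; rewrite eqEcard sub1set iF cards1.
rewrite F_i in cA nA; have rich_eq := card_rich1 cA.
have rich_ne : rich i A 1 != fset0 by rewrite -cardfs_gt0 rich_eq cardfs_gt0.
have S_le : (spcard1 (rich i A 1) <= spcard A)%N.
  by have := spcard_rich i (isT : (0 < 1)%N) cA nA; rewrite mul1n.
have := ln_INR_le (spcard1_gt0 rich_ne) S_le.
by have := adm _ rich_ne; rewrite rich_eq /sp_log_bound [INR 1]/= Rdiv_1_r; lra.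
Qed.

Lemma rich_fibers_log_bound δ k a E d (F : {set 'I_d}) A i M :
    0 <= δ -> (0 < k)%N -> 0 <= E -> free_sp_bound δ k a E ->
    i \in F -> (#|F| <= k.+1)%N -> const_off F A -> nonzero_on F A ->
    (0 < M)%N -> rich i A M != fset0 ->
  ln (INR #|` rich i A M|) + (a + (1 + δ / INR k) * ln (INR M) - E * loglog #|` A|)
    <= ln 2 + ln (INR (spcard A)).
Proof.
move=> δ_ge0 k_gt0 E_ge0 bound iF F_le cA nA M_gt0 rich_ne.
set T := a + _ - _.
have α_ge0 : 0 <= 1 + δ / INR k by have := le1_add_div δ_ge0 k_gt0; lra.
have fiber_bound b : b \in rich i A M -> exp T <= INR (spcard (fiber (coord i) A b)).
  move=> b_rich; have fib_ne := rich_fiber_ne M_gt0 b_rich.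
  move: b_rich; rewrite inE => /andP[_ M_le].
  apply: exp_le_of_le_ln; first exact/INR_gt0/spcard_gt0.
  apply: log_bound_mono α_ge0 E_ge0 M_gt0 M_le (fsubset_leq_card (fiber_sub _ _ _)) _.
  apply: (bound d (F :\ i) _ fib_ne _ (fiber_const_off cA) (fiber_nonzero nA)).
  by move: F_le; rewrite (cardsD1 i F) iF; lia.
have K_gt0 : 0 < INR #|` rich i A M| by apply/INR_gt0; rewrite cardfs_gt0.
have := Rle_trans _ _ _ (INR_sum_ge fiber_bound)
  (le_INR _ _ (ssrnat.leP (sum_spcard_fiber_le i A (fset_uniq (rich i A M))))).
rewrite mult_INR [INR 2]/= => /(ln_le _ _ (Rmult_lt_0_compat _ _ K_gt0 (exp_pos T))).
have S_le := leq_trans (leq_pmull _ M_gt0) (spcard_rich i M_gt0 cA nA).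
have S_gt0 : 0 < INR (spcard A) by apply/INR_gt0/(leq_trans (spcard1_gt0 rich_ne) S_le).
by rewrite !ln_mult ?ln_exp //; [lra | exact: exp_pos].
Qed.

Lemma rich_sumprod_log_bound δ a0 E0 d (F : {set 'I_d}) A i M :
    0 <= E0 -> log_admissible δ a0 E0 -> const_off F A -> nonzero_on F A ->
    (0 < M)%N -> rich i A M != fset0 ->
  ln (INR M) + (a0 + (1 + δ) * ln (INR #|` rich i A M|) - E0 * loglog #|` A|)
    <= ln (INR (spcard A)).
Proof.
move=> E0_ge0 adm cA nA M_gt0 rich_ne; have := adm _ rich_ne.
have K_gt0 : (0 < #|` rich i A M|)%N by rewrite cardfs_gt0.
have := Rmult_le_compat_l _ _ _ E0_ge0 (loglog_le K_gt0 (@card_rich_le d i A M)).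
have S1_gt0 := spcard1_gt0 rich_ne.
have MS1_gt0 : (0 < M * spcard1 (rich i A M))%N by rewrite muln_gt0 M_gt0.
have := ln_INR_le MS1_gt0 (spcard_rich i M_gt0 cA nA).
by rewrite mult_INR ln_mult; [lra | exact: INR_gt0 | exact: INR_gt0].
Qed.

Lemma log_weighted_combination δ k a a0 E E0 x y l L s :
    0 <= δ -> 0 < k -> 0 <= E -> 0 <= E0 -> 0 <= L -> a <= 0 -> a0 <= 0 ->
    l <= x + y + L ->
    x + (a0 + (1 + δ) * y - E0 * L) <= s ->
    y + (a + (1 + δ / k) * x - E * L) <= ln 2 + s ->
  a0 + a - ln 2 + (1 + δ / (k + 1)) * l - (1 + δ + E0 + E) * L <= s.
Proof.
move=> δ_ge0 k_gt0 E_ge0 E0_ge0 L_ge0 a_le0 a0_le0 l_le sp_bound fiber_bound.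
have ln2_pos := ln2_gt0.
(* With weights [k] and [1], [x] and [y] both get the coefficient [k + 1 + δ]. *)
have weighted : k * y + k * a + (k + δ) * x - k * E * L + (x + (a0 + (1 + δ) * y - E0 * L))
    <= (k + 1) * s + k * ln 2.
  have := Rmult_le_compat_l _ _ _ (Rlt_le _ _ k_gt0) fiber_bound.
  have -> : k * (y + (a + (1 + δ / k) * x - E * L)) = k * y + k * a + (k + δ) * x - k * E * L.
    by field; lra.
  lra.
apply: (Rmult_le_reg_l (k + 1)); first lra.
have -> : (k + 1) * (a0 + a - ln 2 + (1 + δ / (k + 1)) * l - (1 + δ + E0 + E) * L) =
    (k + 1) * (a0 + a - ln 2) + (k + 1 + δ) * l - (k + 1) * (1 + δ + E0 + E) * L.
  by field; lra.
have := Rmult_le_compat_l (k + 1 + δ) _ _ ltac:(lra) l_le.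
have := Rmult_le_pos _ _ (Rmult_le_pos _ _ (Rlt_le _ _ k_gt0) δ_ge0) L_ge0.
have := Rmult_le_pos _ _ (Rmult_le_pos _ _ (Rlt_le _ _ k_gt0) E0_ge0) L_ge0.
have := Rmult_le_compat_l _ _ _ (Rlt_le _ _ k_gt0) a0_le0.
have := Rmult_le_pos _ _ E_ge0 L_ge0.
lra.
Qed.

Lemma free_sp_bound_succ δ k a E a0 E0 :
    0 <= δ -> (0 < k)%N -> a <= 0 -> 0 <= E -> a0 <= 0 -> 0 <= E0 ->
    log_admissible δ a0 E0 -> free_sp_bound δ k a E ->
  free_sp_bound δ k.+1 (a0 + a - ln 2) (1 + δ + E0 + E).
Proof.
move=> δ_ge0 k_gt0 a_le0 E_ge0 a0_le0 E0_ge0 adm bound d F A A_ne F_le cA nA.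
case: (set_0Vmem F) => [F0|[i iF]].
  by apply: sp_log_bound_const; rewrite -?F0 //; have := ln2_gt0; lra.
have N_gt0 : (0 < #|` A|)%N by rewrite cardfs_gt0.
have [M /andP[M_gt0 _] N_le] := rich_pigeonhole i A_ne.
have K_gt0 : (0 < #|` rich i A M|)%N.
  rewrite lt0n; apply/eqP => K0; move: N_le; rewrite K0 [INR 0]/= Rmult_0_r Rmult_0_l.
  by have := INR_gt0 N_gt0; lra.
have rich_ne : rich i A M != fset0 by rewrite -cardfs_gt0.
have l_le : ln (INR #|` A|) <= ln (INR M) + ln (INR #|` rich i A M|) + loglog #|` A|.
  have L_gt0 : 0 < 1 + ln (INR #|` A|) by have := ln_INR_ge0 N_gt0; lra.
  move: N_le => /(ln_le _ _ (INR_gt0 N_gt0)).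
  have M_pos := INR_gt0 M_gt0; have K_pos := INR_gt0 K_gt0.
  by rewrite !ln_mult //; exact: Rmult_lt_0_compat.
rewrite /sp_log_bound S_INR.
apply: (log_weighted_combination δ_ge0 (INR_gt0 k_gt0) E_ge0 E0_ge0 (loglog_ge0 N_gt0)
  a_le0 a0_le0 l_le).
  exact: rich_sumprod_log_bound E0_ge0 adm cA nA M_gt0 rich_ne.
exact: rich_fibers_log_bound δ_ge0 k_gt0 E_ge0 bound iF F_le cA nA M_gt0 rich_ne.
Qed.

Lemma free_sp_bound_exists δ : 0 <= δ -> sp_admissible δ ->
  forall k, (0 < k)%N -> exists a E, a <= 0 /\ 0 <= E /\ free_sp_bound δ k a E.
Proof.
move=> δ_ge0 /sp_admissible_log[a0 [E0 [a0_le0 [E0_ge0 adm]]]].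
elim=> [//|[_ _|k IHk _]]; first by exists a0, E0; do 2!split=> //; exact: free_sp_bound1.
have [a [E [a_le0 [E_ge0 bound]]]] := IHk isT.
exists (a0 + a - ln 2), (1 + δ + E0 + E); split; first by have := ln2_gt0; lra.
by split; [lra | exact: free_sp_bound_succ].
Qed.

Lemma sp_log_bound_sub d α a E (A' A : {fset 'rV[R]_d}) (c : nat) :
    0 <= α -> 0 <= E -> A' `<=` A -> A' != fset0 -> (#|` A| <= c * #|` A'|)%N ->
  sp_log_bound α a E A' -> sp_log_bound α (a - α * ln (INR c)) E A.
Proof.
move=> α_ge0 E_ge0 sA A'_ne A_le; rewrite /sp_log_bound.
have N'_gt0 : (0 < #|` A'|)%N by rewrite cardfs_gt0.
have N'_le := fsubset_leq_card sA.
have c_gt0 : (0 < c)%N by move: A_le; case: c => //; rewrite mul0n; lia.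
have := ln_INR_le (spcard_gt0 A'_ne) (spcard_sub sA).
have := Rmult_le_compat_l _ _ _ E_ge0 (loglog_le N'_gt0 N'_le).
have := ln_INR_le (leq_trans N'_gt0 N'_le) A_le; rewrite mult_INR ln_mult; try exact: INR_gt0.
move=> /(Rmult_le_compat_l _ _ _ α_ge0); lra.
Qed.

Lemma gtrsim_of_sp_log_bound d α a E (A : {fset 'rV[R]_d}) :
    0 <= E -> A != fset0 -> sp_log_bound α a E A ->
  gtrsim_with (exp (a - E * ln 3)) (- E) (INR #|` sumset A| + INR #|` prodset A|)%R
    (Rpower (INR #|` A|) α) #|` A|.
Proof.
move=> E_ge0 A_ne; rewrite /sp_log_bound /spcard plus_INR => bound.
have N_gt0 : (0 < #|` A|)%N by rewrite cardfs_gt0.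
have X_gt0 := INR_gt0 (spcard_gt0 A_ne); rewrite /spcard plus_INR in X_gt0.
apply/(gtrsim_with_ln _ _ _ (exp_pos _) X_gt0); rewrite ln_exp.
have [lo _] := ln_ln_loglog N_gt0; have := Rmult_le_compat_l _ _ _ E_ge0 lo.
lra.
Qed.

Lemma axis_aligned_sp_log_bound δ r a E d (f : 'I_d -> option R) (A : {fset 'rV[R]_d}) :
    0 <= δ -> (0 < r)%N -> 0 <= E -> free_sp_bound δ r a E ->
    axis_dim f = r -> A != fset0 -> (forall x, x \in A -> in_axis_aligned f x) ->
  sp_log_bound (1 + δ / INR r) (a - (1 + δ / INR r) * ln (INR (2 ^ r))) E A.
Proof.
move=> δ_ge0 r_gt0 E_ge0 bound F_r A_ne A_H.
set F := [set j | f j == None]; have cA := axis_aligned_const_off A_H.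
have [P] := large_zero_class F A; rewrite [#|F|]F_r => A_le.
have A'_ne : fiber (zero_pattern F) A P != fset0.
  by rewrite -cardfs_gt0 -(@ltn_pmul2l (2 ^ r)) ?expn_gt0 // muln0 (leq_trans _ A_le) ?cardfs_gt0.
have α_ge0 : 0 <= 1 + δ / INR r by have := le1_add_div δ_ge0 r_gt0; lra.
apply: (sp_log_bound_sub α_ge0 E_ge0 (fiber_sub _ _ _) A'_ne A_le).
apply: (bound d (F :\: P)) => //; last exact: zero_class_nonzero.
  by rewrite -F_r; apply/subset_leq_card/subsetDl.
exact: zero_class_const_off.
Qed.

Lemma axis_aligned_sp_gtrsim δ r : 0 <= δ -> (0 < r)%N -> sp_admissible δ ->
  exists C D, 0 < C /\
    forall d (f : 'I_d -> option R) (A : {fset 'rV[R]_d}),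
      axis_dim f = r -> A != fset0 -> (forall x, x \in A -> in_axis_aligned f x) ->
      gtrsim_with C D (INR #|` sumset A| + INR #|` prodset A|)%R
        (Rpower (INR #|` A|) (1 + δ / INR r)) #|` A|.
Proof.
move=> δ_ge0 r_gt0 adm.
have [a [E [_ [E_ge0 bound]]]] := free_sp_bound_exists δ_ge0 adm r_gt0.
exists (exp (a - (1 + δ / INR r) * ln (INR (2 ^ r)) - E * ln 3)), (- E).
split=> [|d f A F_r A_ne A_H]; first exact: exp_pos.
apply: (gtrsim_of_sp_log_bound E_ge0 A_ne).
exact: axis_aligned_sp_log_bound δ_ge0 r_gt0 E_ge0 bound F_r A_ne A_H.
Qed.

End LogBounds.

Theorem lemma3p1 (delta1 : R) (Hpos : (0 < delta1)%R)
  (Hadm : sp_admissible delta1) (r : nat) (Hr : (1 <= r)%N) :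
  exists C D : R, (0 < C)%R /\
    forall (d : nat) (f : 'I_d -> option R) (A : {fset 'rV[R]_d}),
      (2 <= d)%N -> (r <= d - 1)%N -> axis_dim f = r ->
      A != fset0 ->
      (forall a, a \in A -> in_axis_aligned f a) ->
      gtrsim_with C D
        (INR #|` sumset A| + INR #|` prodset A|)%R
        (Rpower (INR #|` A|) (1 + delta1 / INR r))
        #|` A|.
Proof.
move/RltP: Hpos => /Rlt_le delta1_ge0.
have [C [D [C_gt0 bound]]] := axis_aligned_sp_gtrsim delta1_ge0 Hr Hadm.
by exists C, D; split=> [|d f A _ _]; [exact/RltP | exact: bound].
Qed.
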